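(* Let $l_1\le l_2\le\cdots\le l_k$ be nonnegative integers with $L=l_1+\cdots+l_k\ge1$. Write $h_{l_1}(z)\cdots h_{l_k}(z)=\sum_{p\ge0}c_p h_p(z)$. Then $|c_p|\le(2L)^{L-l_k}$ for every $p$.
   Context: $h_j$ denotes the $j$-th monic probabilists' Hermite polynomial: $h_0=1$, $h_1(z)=z$, $h_{j+1}(z)=zh_j(z)-jh_{j-1}(z)$; they are orthogonal under the standard Gaussian measure with $\mathbb E[h_p^2]=p!$. *)

From HB Require Import structures.
From mathcomp Require Import all_boot all_order all_algebra.
Set Implicit Arguments. Unset Strict Implicit. Unset Printing Implicit Defensive.
Import Order.TTheory GRing.Theory Num.Theory.
Local Open Scope ring_scope.

(* Monic probabilists' Hermite polynomials:
   h_0 = 1, h_1 = X, h_{j+1} = X h_j - j h_{j-1}.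
   herm_pair n = (h_n, h_{n+1}). *)
Fixpoint herm_pair (R : nzRingType) (n : nat) : {poly R} * {poly R} :=
  match n with
  | 0%N => (1, 'X)
  | m.+1 => let: (a, b) := herm_pair R m in (b, 'X * b - m.+1%:R *: a)
  end.

Definition herm (R : nzRingType) (n : nat) : {poly R} := (herm_pair R n).1.

From HB Require Import structures.
From mathcomp Require Import all_boot all_order all_algebra.
From mathcomp Require Import lra.
Import Order.TTheory GRing.Theory Num.Theory.
Local Open Scope ring_scope.

(* Call a polynomial P "(D, M)-bounded" when it is a combination
   of h_0, ..., h_{D-1} whose coefficients all have absolute value <= M.
   The three-term recurrence X h_p = h_{p+1} + p h_{p-1} shows that
   multiplication by X turns a (D, M)-bounded polynomial into a
   (D+1, D M)-bounded one.  Feeding this into h_{j+2} = X h_{j+1} - (j+1) h_j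
   and inducting on j, multiplication by h_j turns a (D, M)-bounded polynomial
   into a (D+j, M (2T)^j)-bounded one, as long as D + j <= T + 1.  Starting
   from the (l_k + 1, 1)-bounded h_{l_k} and multiplying by the remaining
   factors h_{l_1}, ..., h_{l_{k-1}} (total degree L - l_k) with T = L gives an
   expansion of the product with coefficients bounded by (2L)^(L - l_k).
   Finally the h_p are linearly independent (h_p has degree p and leading
   coefficient 1), so every other expansion of the product has the same
   coefficients, which yields the bound for all of them. *)

Lemma sum_ord_vanishing {V : zmodType} (F : nat -> V) (D D' : nat) :
  (forall p, (D <= p)%N -> F p = 0) -> (D <= D')%N ->
  \sum_(p < D') F p = \sum_(p < D) F p.
Proof.
move=> F0; elim: D' => [|n IHn]; first by rewrite leqn0 => /eqP ->.
rewrite leq_eqVlt => /orP [/eqP -> //| ltDn].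
by rewrite big_ord_recr /= F0 // addr0 IHn.
Qed.

Lemma sum_ord_truncate {V : zmodType} (F : nat -> V) {n K : nat} :
  (n <= K)%N -> \sum_(p < n) F p = \sum_(p < K) (if (p < n)%N then F p else 0).
Proof. by move=> leK; rewrite (big_ord_widen K) // big_mkcond. Qed.

Section HermiteAlgebra.
Set Implicit Arguments.
Unset Strict Implicit.
Variable R : nzRingType.

Lemma herm_pairE n : herm_pair R n = (herm R n, herm R n.+1).
Proof. by rewrite /herm /=; case: (herm_pair R n). Qed.

Lemma herm0 : herm R 0 = 1. Proof. by []. Qed.

Lemma herm1 : herm R 1 = 'X. Proof. by []. Qed.

Lemma hermSS n : herm R n.+2 = 'X * herm R n.+1 - n.+1%:R *: herm R n.
Proof. by rewrite {1}/herm /= herm_pairE. Qed.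

Lemma mulX_herm p : 'X * herm R p = herm R p.+1 + p%:R *: herm R p.-1.
Proof.
case: p => [|n]; first by rewrite herm0 herm1 mulr1 scale0r addr0.
by rewrite hermSS subrK.
Qed.

Lemma herm_coef_top n k : (n <= k)%N -> (herm R n)`_k = (k == n)%:R.
Proof.
pose top n := forall k, (n <= k)%N -> (herm R n)`_k = (k == n)%:R.
suff : top n /\ top n.+1 by case=> /(_ k).
elim: n {k} => [|n [IHn IHSn]].
  split=> k _; first by rewrite herm0 coefC; case: eqP.
  by rewrite herm1 coefX.
split=> // k leSk; rewrite hermSS coefB coefXM coefZ.
case: k leSk => [|k] // leSk.
have ltnk : (n < k.+1)%N by apply: leq_trans leSk.
by rewrite /= IHSn // IHn ?(ltnW ltnk) // (gtn_eqF ltnk) mulr0 subr0.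
Qed.

Lemma herm_sum_eq0 {K : nat} {d : nat -> R} :
  \sum_(p < K) d p *: herm R p = 0 -> forall p, (p < K)%N -> d p = 0.
Proof.
elim: K => [|K IHK] // sum0.
rewrite big_ord_recr /= in sum0.
have dK : d K = 0.
  have := congr1 (fun q : {poly R} => q`_K) sum0.
  rewrite coefD coef_sum coefZ herm_coef_top // eqxx mulr1 coef0 big1 ?add0r //.
  move=> i _; have ltiK := ltn_ord i.
  by rewrite coefZ herm_coef_top ?(ltnW ltiK) // (gtn_eqF ltiK) mulr0.
move: sum0; rewrite dK scale0r addr0 => /IHK sum0 p.
by rewrite ltnS leq_eqVlt => /orP [/eqP -> | /sum0].
Qed.

Lemma herm_expansion_unique N D (c d : nat -> R) :
  \sum_(p < N) c p *: herm R p = \sum_(p < D) d p *: herm R p ->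
  forall p, (if (p < N)%N then c p else 0) = (if (p < D)%N then d p else 0).
Proof.
move=> eq_cd p; set K := maxn (maxn N D) p.+1.
have leNK : (N <= K)%N by rewrite !leq_max leqnn.
have leDK : (D <= K)%N by rewrite !leq_max leqnn orbT.
pose diff q := (if (q < N)%N then c q else 0) - (if (q < D)%N then d q else 0).
have diff0 : \sum_(q < K) diff q *: herm R q = 0.
  have trunc n (f : nat -> R) : (n <= K)%N ->
      \sum_(q < K) (if (q < n)%N then f q else 0) *: herm R q = \sum_(q < n) f q *: herm R q.
    move=> leK; rewrite (sum_ord_truncate (fun q => f q *: herm R q) leK).
    by apply: eq_bigr => q _; case: ifP; rewrite ?scale0r.
  under eq_bigr do rewrite scalerBl.
  by rewrite sumrB !trunc // eq_cd subrr.
have ltpK : (p < K)%N by rewrite leq_max leqnn orbT.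
by have /eqP := herm_sum_eq0 diff0 ltpK; rewrite subr_eq0 => /eqP.
Qed.

End HermiteAlgebra.

Section HermiteBounds.
Set Implicit Arguments.
Unset Strict Implicit.
Variable R : realDomainType.
Implicit Types (P Q : {poly R}) (D : nat).

Definition herm_bounded P D (M : R) :=
  exists c : nat -> R, [/\ forall p, (D <= p)%N -> c p = 0,
     forall p, `|c p| <= M & P = \sum_(p < D) c p *: herm R p].

Lemma herm_bounded_ge0 P D (M : R) : herm_bounded P D M -> 0 <= M.
Proof. by case=> c [_ le_cM _]; apply: le_trans (le_cM 0%N). Qed.

Lemma herm_bounded_weaken P D D' (M M' : R) :
  herm_bounded P D M -> (D <= D')%N -> M <= M' -> herm_bounded P D' M'.
Proof.
case=> c [c0 le_cM ->] leDD' leMM'; exists c; split.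
- by move=> p le_p; apply: c0; apply: leq_trans le_p.
- by move=> p; apply: le_trans (le_cM p) leMM'.
- apply/esym/(@sum_ord_vanishing _ (fun p => c p *: herm R p) D D') => // p /c0 ->.
  exact: scale0r.
Qed.

Lemma herm_bounded_herm q : herm_bounded (herm R q) q.+1 1.
Proof.
exists (fun p => (p == q)%:R); split.
- by move=> p; rewrite ltnNge; case: eqP => // ->; rewrite leqnn.
- by move=> p; case: eqP; rewrite ?normr1 ?normr0.
- rewrite big_ord_recr /= eqxx scale1r big1 ?add0r // => i _.
  by rewrite (ltn_eqF (ltn_ord i)) scale0r.
Qed.

Lemma herm_bounded_sub P Q D (M M' a : R) :
  herm_bounded P D M -> herm_bounded Q D M' ->
  herm_bounded (P - a *: Q) D (M + `|a| * M').
Proof.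
case=> c [c0 le_cM ->] [c' [c'0 le_c'M' ->]].
exists (fun p => c p - a * c' p); split.
- by move=> p le_p; rewrite c0 // c'0 // mulr0 subr0.
- by move=> p; rewrite (le_trans (ler_normB _ _)) // normrM lerD // ler_wpM2l.
- rewrite scaler_sumr -sumrB; apply: eq_bigr => i _.
  by rewrite scalerBl scalerA.
Qed.

(* Hermite coefficients of X P, from those of P (three-term recurrence). *)
Definition mulX_coef (c : nat -> R) (p : nat) : R :=
  (if p is q.+1 then c q else 0) + p.+1%:R * c p.+1.

Lemma mulX_herm_sum D (c : nat -> R) : (forall p, (D <= p)%N -> c p = 0) ->
  'X * \sum_(p < D) c p *: herm R p = \sum_(p < D.+1) mulX_coef c p *: herm R p.
Proof.
move=> c0; rewrite mulr_sumr.
under eq_bigr do rewrite -scalerAr mulX_herm scalerDr scalerA.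
under [RHS]eq_bigr do rewrite scalerDl.
rewrite !big_split /=; congr (_ + _).
  by rewrite [RHS]big_ord_recl /= scale0r add0r.
have lower : \sum_(p < D.+1) (c p * p%:R) *: herm R p.-1 =
             \sum_(p < D) (c p * p%:R) *: herm R p.-1.
  apply: (sum_ord_vanishing (fun p => (c p * p%:R) *: herm R p.-1)) => // p /c0 ->.
  by rewrite mul0r scale0r.
have upper : \sum_(p < D.+1) (p.+1%:R * c p.+1) *: herm R p =
             \sum_(p < D) (p.+1%:R * c p.+1) *: herm R p.
  apply: (sum_ord_vanishing (fun p => (p.+1%:R * c p.+1) *: herm R p)) => // p /leqW /c0 ->.
  by rewrite mulr0 scale0r.
rewrite -lower upper big_ord_recl /= mulr0 scale0r add0r.
by apply: eq_bigr => i _; rewrite mulrC.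
Qed.

Lemma herm_bounded_mulX P D (M : R) :
  herm_bounded P D M -> herm_bounded ('X * P) D.+1 (D%:R * M).
Proof.
move=> bndP; have M0 := herm_bounded_ge0 bndP.
case: bndP => c [c0 le_cM ->]; exists (mulX_coef c); split.
- move=> [|p] // leDp; rewrite /mulX_coef (c0 p) // (c0 p.+2) ?mulr0 ?addr0 //.
  by rewrite leqW // leqW.
- move=> p; case: D c0 => [|D] c0.
    rewrite /mulX_coef c0 // mulr0 addr0 mul0r.
    by case: p => [|p]; rewrite ?c0 ?normr0.
  rewrite /mulX_coef (le_trans (ler_normD _ _)) // -[D.+1%:R]natr1 mulrDl mul1r.
  rewrite addrC lerD //; last by case: p => [|p]; rewrite ?normr0.
  have [ltpD | leDp] := ltnP p.+1 D.+1.
    by rewrite normrM ger0_norm // ler_pM // ler_nat.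
  by rewrite c0 // mulr0 normr0 mulr_ge0.
- exact: mulX_herm_sum.
Qed.

(* The numerical inequality behind one step of the recurrence for h_j. *)
Lemma recurrence_step_bound (a b t x : R) : 0 <= x -> 1 <= t -> a <= t -> b <= t ->
  a * (x * (2 * t)) + b * x <= x * (2 * t) ^+ 2.
Proof.
move=> x0 t1 le_at le_bt.
have t0 : 0 <= t by apply: le_trans t1.
have h1 : 0 <= (t - a) * (x * (2 * t)) by rewrite !mulr_ge0 ?subr_ge0.
have h2 : 0 <= (t - b) * x by rewrite mulr_ge0 ?subr_ge0.
have h3 : 0 <= (t - 1) * (t * x) by rewrite !mulr_ge0 ?subr_ge0.
nra.
Qed.

(* Multiplication by h_j and h_{j+1}, proved together by induction on j. *)
Lemma herm_bounded_mulherm_pair T P D j (M : R) :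
  (1 <= D)%N -> (D + j.+1 <= T.+1)%N -> herm_bounded P D M ->
  herm_bounded (P * herm R j) (D + j) (M * (2 * T)%:R ^+ j) /\
  herm_bounded (P * herm R j.+1) (D + j.+1) (M * (2 * T)%:R ^+ j.+1).
Proof.
move=> D1 + bndP; have M0 := herm_bounded_ge0 bndP.
elim: j => [|j IHj] leT.
  rewrite herm0 herm1 mulr1 addn0 expr0 mulr1; split => //.
  rewrite mulrC addn1; apply: herm_bounded_weaken (herm_bounded_mulX bndP) _ _ => //.
  rewrite mulrC ler_wpM2l // ler_nat; rewrite addn1 ltnS in leT.
  by rewrite (leq_trans leT) // mul2n -addnn leq_addr.
have leT' : (D + j.+1 <= T)%N by rewrite -ltnS -addnS.
have [bnd_j bnd_Sj] := IHj (leqW leT'); split => //.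
set x := M * (2 * T)%:R ^+ j.
have x0 : 0 <= x by rewrite mulr_ge0 // exprn_ge0.
have herm_rec : P * herm R j.+2 = 'X * (P * herm R j.+1) - j.+1%:R *: (P * herm R j).
  by rewrite hermSS mulrBr mulrCA scalerAr.
have bnd_Xj := herm_bounded_mulX bnd_Sj; rewrite -addnS in bnd_Xj.
have bnd_j' : herm_bounded (P * herm R j) (D + j.+2) x.
  by apply: herm_bounded_weaken bnd_j _ (lexx _); rewrite leq_add2l leqW.
rewrite herm_rec; apply: herm_bounded_weaken (herm_bounded_sub _ bnd_Xj bnd_j') _ _ => //.
have -> : M * (2 * T)%:R ^+ j.+1 = x * (2 * T)%:R by rewrite /x exprSr mulrA.
have -> : M * (2 * T)%:R ^+ j.+2 = x * (2 * T)%:R ^+ 2 by rewrite /x -mulrA -exprD addn2.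
rewrite ger0_norm // natrM; apply: recurrence_step_bound => //; rewrite ?ler_nat //.
- by rewrite ler1n (leq_trans _ leT') // addnS.
- by rewrite (leq_trans _ leT') // leq_addl.
Qed.

Lemma herm_bounded_mulherm T P D j (M : R) :
  (1 <= D)%N -> (D + j <= T.+1)%N -> herm_bounded P D M ->
  herm_bounded (P * herm R j) (D + j) (M * (2 * T)%:R ^+ j).
Proof.
case: j => [|j] D1 leT bndP; first by rewrite herm0 mulr1 addn0 expr0 mulr1.
by case: (herm_bounded_mulherm_pair D1 leT bndP).
Qed.

Lemma herm_bounded_prod T s P D (M : R) :
  (1 <= D)%N -> (D + sumn s <= T.+1)%N -> herm_bounded P D M ->
  herm_bounded (P * \prod_(i <- s) herm R i) (D + sumn s) (M * (2 * T)%:R ^+ sumn s).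
Proof.
elim: s P D M => [|x s IHs] P D M D1 leT bndP.
  by rewrite big_nil mulr1 addn0 expr0 mulr1.
rewrite big_cons mulrA /= addnA exprD mulrA.
apply: IHs; rewrite -?addnA //; first exact: leq_trans D1 (leq_addr _ _).
by apply: herm_bounded_mulherm => //; rewrite (leq_trans _ leT) // leq_add2l leq_addr.
Qed.

Lemma herm_bounded_product (l : seq nat) :
  herm_bounded (\prod_(i <- l) herm R i) (sumn l).+1
    ((2 * sumn l)%:R ^+ (sumn l - last 0%N l)).
Proof.
case/lastP: l => [|l x]; first by rewrite big_nil -herm0; apply: herm_bounded_herm.
rewrite sumn_rcons last_rcons addnK -cats1 big_cat big_seq1 /= mulrC.
have := herm_bounded_prod (T := sumn l + x) (s := l) (D := x.+1) isT _ (herm_bounded_herm x).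
by rewrite mul1r (addnC x.+1) addnS; apply.
Qed.

End HermiteBounds.

Theorem proposition5p8 (R : realFieldType) (l : seq nat) :
  sorted leq l -> (1 <= sumn l)%N ->
  (exists (N : nat) (c : nat -> R),
      \prod_(i <- l) herm R i = \sum_(p < N) c p *: herm R p) /\
  (forall (N : nat) (c : nat -> R),
      \prod_(i <- l) herm R i = \sum_(p < N) c p *: herm R p ->
      forall p : nat, (p < N)%N ->
        `|c p| <= ((2 * sumn l) ^ (sumn l - last 0%N l))%:R).
Proof.
move=> _ _; have [d [d0 le_dM expand_d]] := herm_bounded_product R l.
split; first by exists (sumn l).+1, d.
move=> N c expand_c p ltpN.
have := herm_expansion_unique (etrans (esym expand_c) expand_d) p.
rewrite ltpN natrX => ->.
by case: ifP => _; [apply: le_dM | rewrite normr0 (le_trans _ (le_dM p))].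
Qed.
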